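(* For $(w,x,y,z)$ define $$\tilde{\mathcal{J}}_1=\frac{(w^2+z^2)xy+\beta(wx+wz+yz)}{wxyz},$$ $$\tilde{\mathcal{J}}_2=\frac{w^2z^2+xz(w^2+x^2+y^2+xz)+wy(x^2+y^2+z^2+wy)+\beta(x^2+y^2+xz+wy)}{wxyz},$$ $$\tilde{\mathcal{J}}_3=\frac{(w+y)(x+z)(xz+yw+\beta)}{wxyz}.$$ Then for every $\beta\in\mathbb{Z}\setminus\{0,-1\}$ and every $(\lambda_1:\lambda_2:\lambda_3)\in\mathbb{P}^2$, the Diophantine equation $$\lambda_1\tilde{\mathcal{J}}_1+\lambda_2\tilde{\mathcal{J}}_2+\lambda_3\tilde{\mathcal{J}}_3=\lambda_1(3\beta+2)+\lambda_2(4\beta+9)+4\lambda_3(\beta+2)$$ has infinitely many integer solutions $(w,x,y,z)$. *)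

From mathcomp Require Import all_boot all_order all_algebra all_field.
Set Implicit Arguments. Unset Strict Implicit. Unset Printing Implicit Defensive.
Import Order.TTheory GRing.Theory Num.Theory.
Local Open Scope ring_scope.

Definition Jt1 (beta w x y z : int) : algC :=
  (((w^2 + z^2) * x * y + beta * (w*x + w*z + y*z))%R%:~R) / ((w*x*y*z)%R%:~R).

Definition Jt2 (beta w x y z : int) : algC :=
  ((w^2 * z^2 + x*z*(w^2 + x^2 + y^2 + x*z) + w*y*(x^2 + y^2 + z^2 + w*y)
     + beta * (x^2 + y^2 + x*z + w*y))%R%:~R) / ((w*x*y*z)%R%:~R).

Definition Jt3 (beta w x y z : int) : algC :=
  (((w + y) * (x + z) * (x*z + y*w + beta))%R%:~R) / ((w*x*y*z)%R%:~R).

(* (w,x,y,z) is an integer solution of the equation (requires wxyz <> 0 so the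
   J~_i are defined). *)
Definition is_solution (beta : int) (l1 l2 l3 : algC) (w x y z : int) : Prop :=
  w * x * y * z != 0 /\
  l1 * Jt1 beta w x y z + l2 * Jt2 beta w x y z + l3 * Jt3 beta w x y z
  = l1 * ((3 * beta + 2)%R%:~R) + l2 * ((4 * beta + 9)%R%:~R)
    + 4%:R * l3 * ((beta + 2)%R%:~R).

Definition infinitely_many (P : int -> int -> int -> int -> Prop) : Prop :=
  forall s : seq (int * int * int * int),
    exists w x y z, P w x y z /\ (w, x, y, z) \notin s.

From mathcomp Require Import all_boot all_order all_algebra all_field.
From mathcomp Require Import zify ring.
Import Order.TTheory GRing.Theory Num.Theory.
Local Open Scope ring_scope.

(* On arithmetic progressions (w, x, y, z) = (a, a + d, a + 2d, a + 3d), each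
   numerator of J~_i minus its constant times wxyz is a multiple of
   [ap_conic b a d] = 3d^2 - 3bad - ba^2 + b, so every integer point of this
   conic solves the three equations J~_i = const simultaneously, whatever
   (l1 : l2 : l3) is.  The conic is symmetric under (a, d) -> (-a, -d) and is
   quadratic in a and in d, so the Vieta involutions a -> -a - 3d and
   d -> ba - d, followed by negation, give a map [ap_conic_step] preserving it.
   Starting from (1, b), the first coordinate grows in absolute value along the
   orbit (with alternating sign when b <= -2), and no term of the progression
   vanishes since the signs of a and d are controlled. *)

Definition ap_conic (b a d : int) : int := 3 * d ^+ 2 - 3 * b * a * d - b * a ^+ 2 + b.

Definition ap_prod (a d : int) : int := a * (a + d) * (a + 2 * d) * (a + 3 * d).

Lemma divr_intr_eq (F : numFieldType) (n c m : int) :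
  n = c * m -> m != 0 -> (n%:~R / m%:~R : F) = c%:~R.
Proof.
by move=> -> m_neq0; rewrite intrM mulfK // intr_eq0.
Qed.

Section ArithmeticProgression.

Variables b a d : int.
Hypothesis conic0 : ap_conic b a d = 0.

Let w := a.
Let x := a + d.
Let y := a + 2 * d.
Let z := a + 3 * d.

Lemma eq_scaled_ap_prod (k c n : int) :
  n - c * ap_prod a d = k * ap_conic b a d -> n = c * ap_prod a d.
Proof. by rewrite conic0 mulr0 => /eqP; rewrite subr_eq0 => /eqP. Qed.

Lemma Jt1_ap : ap_prod a d != 0 -> Jt1 b w x y z = (3 * b + 2)%:~R.
Proof.
move=> nz; apply: divr_intr_eq nz.
apply: (eq_scaled_ap_prod (6 * d ^+ 2 + 9 * a * d + 3 * a ^+ 2)).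
by rewrite /ap_prod /ap_conic /w /x /y /z; ring.
Qed.

Lemma Jt2_ap : ap_prod a d != 0 -> Jt2 b w x y z = (4 * b + 9)%:~R.
Proof.
move=> nz; apply: divr_intr_eq nz.
apply: (eq_scaled_ap_prod (8 * d ^+ 2 + 12 * a * d + 4 * a ^+ 2)).
by rewrite /ap_prod /ap_conic /w /x /y /z; ring.
Qed.

Lemma Jt3_ap : ap_prod a d != 0 -> Jt3 b w x y z = (4 * (b + 2))%:~R.
Proof.
move=> nz; apply: divr_intr_eq nz.
apply: (eq_scaled_ap_prod (8 * d ^+ 2 + 12 * a * d + 4 * a ^+ 2)).
by rewrite /ap_prod /ap_conic /w /x /y /z; ring.
Qed.

Lemma is_solution_ap (l1 l2 l3 : algC) :
  ap_prod a d != 0 -> is_solution b l1 l2 l3 w x y z.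
Proof.
move=> nz; split; first exact: nz.
by rewrite Jt1_ap // Jt2_ap // Jt3_ap // intrM; ring.
Qed.

End ArithmeticProgression.

Definition ap_conic_step (b : int) (p : int * int) : int * int :=
  let a' := p.1 + 3 * p.2 in (a', b * a' + p.2).

Definition ap_conic_orbit (b : int) (n : nat) : int * int :=
  iter n (ap_conic_step b) (1, b).

Lemma ap_conic_step_invariant (b : int) (p : int * int) :
  ap_conic b (ap_conic_step b p).1 (ap_conic_step b p).2 = ap_conic b p.1 p.2.
Proof. by rewrite /ap_conic /=; ring. Qed.

Lemma ap_conic_orbit_root (b : int) (n : nat) :
  ap_conic b (ap_conic_orbit b n).1 (ap_conic_orbit b n).2 = 0.
Proof.
elim: n => [|n IH]; first by rewrite /ap_conic /=; ring.
by rewrite /ap_conic_orbit iterS ap_conic_step_invariant.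
Qed.

Lemma ap_conic_orbit_pos (b : int) (n : nat) : 0 < b ->
  n%:Z < (ap_conic_orbit b n).1 /\ 0 < (ap_conic_orbit b n).2.
Proof.
move=> b_gt0; elim: n => [|n]; first by rewrite /=; lia.
by rewrite /ap_conic_orbit iterS; case: (iter _ _ _) => a d /= [? ?]; split; nia.
Qed.

Lemma ap_conic_orbit_neg (b : int) (n : nat) : b <= -2 ->
  let: (a, d) := ap_conic_orbit b n in
  (n%:Z < a /\ a < - d) \/ (a < - n%:Z /\ - a < d).
Proof.
move=> b_le; elim: n => [|n]; first by left; lia.
rewrite /ap_conic_orbit iterS; case: (iter _ _ _) => a d /= [[? ?]|[? ?]].
  by right; split; nia.
by left; split; nia.
Qed.

Lemma ap_conic_orbit_unbounded (b : int) (n : nat) : b != 0 -> b != -1 ->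
  let: (a, d) := ap_conic_orbit b n in (n < `|a|)%N /\ ap_prod a d != 0.
Proof.
move=> b_neq0 b_neqN1; rewrite /ap_prod.
have [b_gt0 | b_le0] := ltrP 0 b.
  move: (ap_conic_orbit_pos b n b_gt0); case: ap_conic_orbit => a d /= [? ?].
  by split; [lia | rewrite !mulf_neq0 //; apply/eqP; lia].
have b_le : b <= -2 by lia.
move: (ap_conic_orbit_neg b n b_le); case: ap_conic_orbit => a d.
by case=> -[? ?]; (split; [lia | rewrite !mulf_neq0 //; apply/eqP; lia]).
Qed.

Lemma infinitely_many_of_unbounded (P : int -> int -> int -> int -> Prop) :
  (forall M : nat, exists w x y z, P w x y z /\ (M < `|w|)%N) ->
  infinitely_many P.
Proof.
move=> unbounded s; pose norm1 (t : int * int * int * int) := `|t.1.1.1|%N.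
have [w [x [y [z [Pwxyz w_big]]]]] := unbounded (\max_(t <- s) norm1 t)%N.
exists w, x, y, z; split => //; apply/negP => wxyz_in_s.
have := @leq_bigmax_seq _ s xpredT norm1 _ wxyz_in_s isT.
by rewrite leqNgt w_big.
Qed.

Theorem corollary3p10 (beta : int) (l1 l2 l3 : algC) :
  beta != 0 -> beta != -1 ->
  (l1, l2, l3) != (0, 0, 0) ->
  infinitely_many (is_solution beta l1 l2 l3).
Proof.
move=> beta_neq0 beta_neqN1 _; apply: infinitely_many_of_unbounded => M.
have := ap_conic_orbit_root beta M.
have := ap_conic_orbit_unbounded beta M beta_neq0 beta_neqN1.
case: (ap_conic_orbit beta M) => a d /= [a_big nz] conic0.
exists a, (a + d), (a + 2 * d), (a + 3 * d); split => //.
exact: (is_solution_ap beta a d conic0 l1 l2 l3 nz).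
Qed.
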